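(* Let $C\subseteq\mathbb{F}_q^n$ be a linear code, $t\ge 0$ an integer, and $A,B\subseteq\mathbb{F}_q^n$ linear codes satisfying $A*B\subseteq C^\perp$, $\dim A>t$, $\mathrm{d}(A^\perp)>t$ and $\mathrm{d}(A)+\mathrm{d}(C)>n$. Let $\mathbf{y}=\mathbf{c}+\mathbf{e}$ with $\mathbf{c}\in C$, $\mathrm{w}(\mathbf{e})=t$, $I_{\mathbf{e}}=\mathrm{supp}(\mathbf{e})$, and let $M=M_1\cap M_2$ where $M_1=\{\mathbf{a}\in A\mid \langle \mathbf{a}*\mathbf{y},\mathbf{b}\rangle=0\ \forall \mathbf{b}\in B\}$ and $M_2=\{\mathbf{a}\in A\mid \langle \mathbf{a}*\mathbf{y}^2,\mathbf{v}\rangle=0\ \forall \mathbf{v}\in (B^{\perp}*C)^{\perp}\}$. If $A(I_{\mathbf{e}})=M$, then $\dim B+\dim (B^\perp*C)^\perp\ge t$.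
   Context: All codes are $\mathbb{F}_q$-linear subspaces of $\mathbb{F}_q^n$. $\mathbf{u}*\mathbf{v}=(u_1v_1,\dots,u_nv_n)$, $\mathbf{u}^i=(u_1^i,\dots,u_n^i)$; $A*B$ is the span of all $\mathbf{a}*\mathbf{b}$; $\langle\mathbf{u},\mathbf{v}\rangle=\sum_iu_iv_i$, $X^\perp$ the dual. $\mathrm{w}$ Hamming weight, $\mathrm{d}$ minimum distance, $\mathrm{supp}(\mathbf{x})=\{i:x_i\ne0\}$. For $J\subseteq\{1,\dots,n\}$, $A(J)=\{\mathbf{a}\in A: a_j=0\ \forall j\in J\}\subseteq\mathbb{F}_q^n$. *)

From HB Require Import structures.
From mathcomp Require Import all_boot all_order all_algebra.
Set Implicit Arguments. Unset Strict Implicit. Unset Printing Implicit Defensive.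
Import GRing.Theory.
Local Open Scope ring_scope.

Section Codes.
Variables (F : finFieldType) (n : nat).
Notation vec := 'rV[F]_n.

Definition star (u v : vec) : vec := \row_i (u 0 i * v 0 i).

Definition dotp (u v : vec) : F := \sum_i u 0 i * v 0 i.

Definition supp (x : vec) : {set 'I_n} := [set i | x 0 i != 0].
Definition wt (x : vec) : nat := #|supp x|.

(* minimum distance; by convention d({0}) = n+1 (i.e. larger than n) *)
Definition mindist (C : {vspace vec}) : nat :=
  \big[minn/n.+1]_(c : vec | (c \in C) && (c != 0)) wt c.

Definition starsp (A B : {vspace vec}) : {vspace vec} :=
  <<[seq star p.1 p.2 | p in [pred p : vec * vec | (p.1 \in A) && (p.2 \in B)]]>>%VS.

Definition dual (C : {vspace vec}) : {vspace vec} :=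
  <<[seq x | x in [pred x : vec | [forall c : vec, (c \in C) ==> (dotp x c == 0%R)]]]>>%VS.

Definition shortened (A : {vspace vec}) (J : {set 'I_n}) : {set vec} :=
  [set a | (a \in A) && [forall j in J, a 0 j == 0]].

End Codes.

(* Restricting codewords to the t error positions maps A onto F^t: otherwise
   some nonzero vector supported on I_e would be orthogonal to A, i.e. a word
   of A^perp of weight at most t < d(A^perp).  Hence A(I_e), the kernel of this
   restriction, has codimension exactly t in A.  On the other hand M is the
   kernel on A of the linear map a |-> (<a*y, b_i>, <a*y^2, v_j>), where the b_i
   and v_j are bases of B and (B^perp*C)^perp, so its codimension is at most
   dim B + dim (B^perp*C)^perp.  Only d(A^perp) > t and A(I_e) = M are used. *)
From mathcomp Require Import all_boot all_order all_algebra.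
From mathcomp Require Import zify.
Import Order.TTheory GRing.Theory.
Local Open Scope ring_scope.

Set Implicit Arguments.
Unset Strict Implicit.
Unset Printing Implicit Defensive.

Lemma mxrank_leq_ker (F : fieldType) (m p1 p2 : nat)
    (N : 'M[F]_(m, p1)) (X : 'M[F]_(m, p2)) :
  (forall l : 'rV_m, l *m N = 0 -> l *m X = 0) -> (\rank X <= \rank N)%N.
Proof.
move=> kerNX.
have /mxrankS : (kermx N <= kermx X)%MS.
  apply/row_subP => r; apply/sub_kermxP/kerNX/sub_kermxP; exact: row_sub.
rewrite !mxrank_ker; have := rank_leq_row N; have := rank_leq_row X; lia.
Qed.

Section Codes.
Variables (F : finFieldType) (n : nat).
Notation vec := 'rV[F]_n.
Implicit Types (C U : {vspace vec}) (x w : vec) (J : {set 'I_n}).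

Lemma mindist_leq_wt C x : x \in C -> x != 0 -> (mindist C <= wt x)%N.
Proof.
move=> xC x0.
have := @bigmin_le_cond _ nat _ n.+1 x
  (fun c => (c \in C) && (c != 0)) (@wt F n).
by rewrite xC x0 minEnat leEnat; apply.
Qed.

Lemma wt_lt_mindist_eq0 C x : x \in C -> (wt x < mindist C)%N -> x = 0.
Proof.
move=> xC; apply: contraTeq => x0; rewrite -leqNgt; exact: mindist_leq_wt.
Qed.

Lemma dotp_eq0_vbasis U w :
  (forall i : 'I_(\dim U), dotp w (vbasis U)`_i = 0) ->
  forall b, b \in U -> dotp w b = 0.
Proof.
move=> wU b /coord_vbasis ->; rewrite /dotp.
under eq_bigr => j _ do rewrite summxE mulr_sumr.
rewrite exchange_big big1 // => i _.
transitivity (coord (vbasis U) i b * dotp w (vbasis U)`_i).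
  by rewrite /dotp mulr_sumr; apply: eq_bigr => j _; rewrite mxE mulrCA.
by rewrite wU mulr0.
Qed.

Lemma mem_dual C x : (forall c, c \in C -> dotp x c = 0) -> x \in dual C.
Proof.
move=> xC; apply: memv_span; apply/imageP; exists x => //.
by rewrite inE; apply/forallP => c; apply/implyP => cC; rewrite xC.
Qed.

Definition basis_mx U : 'M[F]_(\dim U, n) := \matrix_i (vbasis U)`_i.

Lemma basis_mx_mem U (l : 'rV_(\dim U)) : l *m basis_mx U \in U.
Proof.
rewrite mulmx_sum_row; apply: rpred_sum => i _; apply: rpredZ.
by rewrite rowK; apply: vbasis_mem; apply: mem_nth; rewrite size_tuple.
Qed.

Lemma mul_basis_mx_tr U x i : (x *m (basis_mx U)^T) 0 i = dotp x (vbasis U)`_i.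
Proof. by rewrite mxE; apply: eq_bigr => j _; rewrite !mxE. Qed.

Definition restr_mx J : 'M[F]_(n, #|J|) := \matrix_(j, i) (j == enum_val i)%:R.

Lemma restr_mxE J x i : (x *m restr_mx J) 0 i = x 0 (enum_val i).
Proof.
rewrite mxE (bigD1 (enum_val i)) //= mxE eqxx mulr1 big1 ?addr0 //.
by move=> j /negbTE nj; rewrite mxE nj mulr0.
Qed.

Lemma restr_mx_trK J : (restr_mx J)^T *m restr_mx J = 1%:M.
Proof.
apply/matrixP => i k; rewrite !mxE (bigD1 (enum_val i)) //= !mxE eqxx mul1r.
rewrite big1 ?addr0; last by move=> j /negbTE nj; rewrite !mxE nj mul0r.
by rewrite (inj_eq enum_val_inj).
Qed.

Lemma supp_restr_mx_tr J (u : 'rV_#|J|) : supp (u *m (restr_mx J)^T) \subset J.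
Proof.
apply/subsetP => j; rewrite inE; apply: contraR => jJ.
rewrite mxE big1 // => i _; rewrite !mxE.
by case: eqP => [ji | _]; [move: jJ; rewrite ji enum_valP | rewrite mulr0].
Qed.

Lemma shortened_restr_mx C J x : x \in shortened C J -> x *m restr_mx J = 0.
Proof.
rewrite inE => /andP[_ /forallP x0]; apply/rowP => i.
by rewrite restr_mxE mxE; have := x0 (enum_val i); rewrite enum_valP => /eqP.
Qed.

Lemma rank_basis_restr_mx C J :
  (#|J| < mindist (dual C))%N -> \rank (basis_mx C *m restr_mx J) = #|J|.
Proof.
move=> Jsmall; rewrite -mxrank_tr trmx_mul; apply/eqP/inj_row_free => u.
rewrite mulmxA; set x := u *m _ => x_orth.
have xC : x \in dual C.
  apply/mem_dual/dotp_eq0_vbasis => i.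
  by rewrite -mul_basis_mx_tr x_orth mxE.
have x0 : x = 0.
  apply: wt_lt_mindist_eq0 xC (leq_ltn_trans _ Jsmall).
  exact/subset_leq_card/supp_restr_mx_tr.
by rewrite -[u]mulmx1 -restr_mx_trK mulmxA -/x x0 !mul0mx.
Qed.

Definition syndrome_mx w U : 'M[F]_(n, \dim U) :=
  \matrix_(j, i) (w 0 j * (vbasis U)`_i 0 j).

Lemma syndrome_mx_eq0 w U x :
  x *m syndrome_mx w U = 0 -> forall b, b \in U -> dotp (star x w) b = 0.
Proof.
move=> /rowP x0; apply: dotp_eq0_vbasis => i.
have := x0 i; rewrite !mxE => <-.
by apply: eq_bigr => j _; rewrite !mxE mulrA.
Qed.

End Codes.

Arguments restr_mx {F n} J.

Theorem theorem3p6 (F : finFieldType) (n t : nat)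
    (A B C : {vspace 'rV[F]_n}) (c e : 'rV[F]_n) :
  (starsp A B <= dual C)%VS ->
  (t < \dim A)%N ->
  (t < mindist (dual A))%N ->
  (n < mindist A + mindist C)%N ->
  c \in C ->
  wt e = t ->
  let y := c + e in
  let M1 := [set a | (a \in A) &&
               [forall b : 'rV[F]_n, (b \in B) ==> (dotp (star a y) b == 0)]] in
  let M2 := [set a | (a \in A) &&
               [forall v : 'rV[F]_n, (v \in dual (starsp (dual B) C)) ==>
                                      (dotp (star a (star y y)) v == 0)]] in
  shortened A (supp e) = M1 :&: M2 ->
  (t <= \dim B + \dim (dual (starsp (dual B) C)))%N.
Proof.
move=> _ _ dA_gt_t _ _ wt_e y M1 M2 A_e_eqM.
set V := dual (starsp (dual B) C).
set G := basis_mx A.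
set S := row_mx (syndrome_mx y B) (syndrome_mx (star y y) V).
have <- : \rank (G *m restr_mx (supp e)) = t.
  by rewrite -wt_e rank_basis_restr_mx // (wt_e : #|supp e| = t).
apply: leq_trans (rank_leq_col (G *m S)); apply: mxrank_leq_ker => l.
rewrite !mulmxA mul_mx_row => /eqP; rewrite row_mx_eq0.
case/andP=> /eqP/syndrome_mx_eq0 yB /eqP/syndrome_mx_eq0 y2V.
apply: (shortened_restr_mx (C := A)); rewrite A_e_eqM !inE basis_mx_mem /=.
apply/andP; split; apply/forallP => b; apply/implyP.
  by move/yB ->.
by move/y2V ->.
Qed.
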